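(* Let $\mathfrak{G}$ be a right-angled graph of groups, $\omega$ a vertex and $\mathfrak{X}=\mathfrak{X}(\mathfrak{G},\omega)$. Let $e,f$ be two edges of $\mathfrak{X}$ labelled by factors $A$ and $B$ respectively, where $A$ is a factor of $G_u$ and $B$ a factor of $G_v$. If $e$ and $f$ belong to the same hyperplane, then there exists an oriented path $\gamma$ in the underlying abstract graph of $\mathfrak{G}$ from $u$ to $v$ such that $\varphi_\gamma(A)=B$.
   Context: An abstract graph consists of a set $V$ of vertices, a set $E$ of arrows, a fixed-point-free involution $e\mapsto\bar e$ on $E$, and maps $s,t:E\to V$ with $t(e)=s(\bar e)$; it is assumed connected. A right-angled graph of groups $\mathfrak{G}$ consists of an abstract graph, for each $v\in V$ a group $G_v$ with a fixed decomposition as a graph product $\Gamma_v\mathcal{G}_v$ (over a simplicial graph $\Gamma_v$ with non-trivial vertex-groups), for each $e\in E$ a group $G_e=G_{\bar e}$ with a fixed decomposition as a graph product, and monomorphisms $\iota_e:G_e\hookrightarrow G_{s(e)}$ which are graphical embeddings: there is an embedding $f$ of the graph of $G_e$ onto an induced subgraph of $\Gamma_{s(e)}$ such that $\iota_e$ restricts to an isomorphism from each vertex-group of $G_e$ onto the vertex-group of $G_{s(e)}$ indexed by the image under $f$ of its vertex. The factors of $G_v$ are the vertex-groups of its fixed graph product decomposition. The fundamental groupoid $\mathfrak{F}$ is the groupoid with object set $V$ generated by the arrows $e\in E$ (morphisms from $s(e)$ to $t(e)$) and the elements of each $G_v$ (morphisms from $v$ to $v$), subject to the relations of each $G_v$,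 $\bar e=e^{-1}$, and $\iota_e(g)\cdot e=e\cdot\iota_{\bar e}(g)$ for $e\in E$, $g\in G_e$. Products are written left to right; the terminus of a morphism is its terminal object. The graph $\mathfrak{X}(\mathfrak{G},\omega)$ has as vertices the morphisms of $\mathfrak{F}$ with initial object $\omega$, two vertices $g,h$ being adjacent iff $h=gs$ where $s$ is either an arrow or a non-trivial element of some factor; such an edge is labelled by that arrow or by the factor containing $s$. It is a quasi-median graph. Hyperplanes are equivalence classes of edges for the transitive closure of ''lie in a common triangle or are opposite sides of an induced 4-cycle''. For an arrow $e$ and a factor $A$ of $G_{s(e)}$, set $\varphi_e(A):=\iota_{\bar e}(\iota_e^{-1}(A))$ (a factor of $G_{t(e)}$) if $A\subset\iota_e(G_e)$ and $\varphi_e(A):=\emptyset$ otherwise, with $\varphi_e(\emptyset)=\emptyset$. For an oriented path $\gamma=e_1\cdots e_n$, $\varphi_\gamma:=\varphi_{e_n}\circ\cdots\circ\varphi_{e_1}$. *)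

From Stdlib Require Import List Relations.
Import ListNotations.

Set Implicit Arguments.

Record grp := Grp {
  car :> Type;
  gmul : car -> car -> car;
  gone : car;
  ginv : car -> car;
  gmulA : forall x y z, gmul x (gmul y z) = gmul (gmul x y) z;
  gmul1g : forall x, gmul gone x = x;
  gmulg1 : forall x, gmul x gone = x;
  gmulVg : forall x, gmul (ginv x) x = gone;
  gmulgV : forall x, gmul x (ginv x) = gone
}.
Arguments gmul {g}.
Arguments gone {g}.
Arguments ginv {g}.

Definition hom {G H : grp} (f : G -> H) : Prop :=
  forall x y, f (gmul x y) = gmul (f x) (f y).

(* ---------- Groups with a fixed graph-product decomposition ----------
   G is the graph product over the simplicial graph (vI, vadj) of the
   non-trivial vertex-groups (fac i), expressed by the universal property
   of the graph product with respect to the inclusions of the factors. *)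
Record gpgroup := GPGroup {
  gg :> grp;
  vI : Type;
  vadj : vI -> vI -> Prop;
  vadj_sym : forall i j, vadj i j -> vadj j i;
  vadj_irr : forall i, ~ vadj i i;
  fac : vI -> gg -> Prop;
  fac_one : forall i, fac i gone;
  fac_mul : forall i a b, fac i a -> fac i b -> fac i (gmul a b);
  fac_inv : forall i a, fac i a -> fac i (ginv a);
  fac_nontriv : forall i, exists a, fac i a /\ a <> gone;
  fac_comm : forall i j a b, vadj i j -> fac i a -> fac j b ->
               gmul a b = gmul b a;
  fac_univ : forall (H : grp) (f : vI -> gg -> H),
      (forall i a b, fac i a -> fac i b -> f i (gmul a b) = gmul (f i a) (f i b)) ->
      (forall i j a b, vadj i j -> fac i a -> fac j b ->
          gmul (f i a) (f j b) = gmul (f j b) (f i a)) ->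
      exists F : gg -> H, hom F /\ (forall i a, fac i a -> F a = f i a) /\
        (forall F' : gg -> H, hom F' -> (forall i a, fac i a -> F' a = f i a) ->
           forall x, F' x = F x)
}.

Definition graphical {H K : gpgroup} (iota : H -> K) : Prop :=
  hom iota /\ (forall x y, iota x = iota y -> x = y) /\
  exists f : vI H -> vI K,
    (forall i j, f i = f j -> i = j) /\
    (forall i j, vadj H i j <-> vadj K (f i) (f j)) /\
    (forall i, (forall a, fac H i a -> fac K (f i) (iota a)) /\
               (forall b, fac K (f i) b -> exists a, fac H i a /\ iota a = b)).

Record RAGoG := MkRAGoG {
  V : Type;
  E : Type;
  bar : E -> E;
  bar_invol : forall e, bar (bar e) = e;
  bar_nofix : forall e, bar e <> e;
  src : E -> V;
  connected : forall u w : V,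
      clos_refl_trans V (fun a b => exists e, src e = a /\ src (bar e) = b) u w;
  Gv : V -> gpgroup;
  Ge : E -> gpgroup;
  Ge_bar : forall e, Ge (bar e) = Ge e;
  iota : forall e, Ge e -> Gv (src e);
  iota_graphical : forall e, graphical (iota e)
}.
Arguments bar {r}.
Arguments src {r}.
Arguments Gv {r}.
Arguments Ge {r}.
Arguments iota {r}.

Definition tgt {G : RAGoG} (e : E G) : V G := src (bar e).

Definition castG (A B : gpgroup) (H : A = B) : A -> B :=
  match H in _ = B' return A -> B' with eq_refl => fun x => x end.

Definition iota_bar {G : RAGoG} (e : E G) : Ge e -> Gv (tgt e) :=
  fun g => iota (bar e) (castG (eq_sym (Ge_bar G e)) g).

Inductive letter (G : RAGoG) :=
| Arr (e : E G)
| Elt (v : V G) (g : Gv v).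
Arguments Arr {G}.
Arguments Elt {G}.

Inductive wpath {G : RAGoG} : V G -> list (letter G) -> V G -> Prop :=
| wnil v : wpath v [] v
| warr e w v : wpath (tgt e) w v -> wpath (src e) (Arr e :: w) v
| welt u (g : Gv u) w v : wpath u w v -> wpath u (Elt u g :: w) v.

Inductive rel_pair {G : RAGoG} : list (letter G) -> list (letter G) -> Prop :=
| rel_mul v (g h : Gv v) : rel_pair [Elt v g; Elt v h] [Elt v (gmul g h)]
| rel_one v : rel_pair [Elt v (@gone (Gv v))] []
| rel_bar e : rel_pair [Arr e; Arr (bar e)] []
| rel_edge e (g : Ge e) :
    rel_pair [Elt (src e) (iota e g); Arr e] [Arr e; Elt (tgt e) (iota_bar e g)].

Definition valid_from {G : RAGoG} (om : V G) (w : list (letter G)) : Prop :=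
  exists v, wpath om w v.

Definition step {G : RAGoG} (om : V G) (w w' : list (letter G)) : Prop :=
  valid_from om w /\ valid_from om w' /\
  exists w1 w2 l r, rel_pair l r /\
    ((w = w1 ++ l ++ w2 /\ w' = w1 ++ r ++ w2) \/
     (w = w1 ++ r ++ w2 /\ w' = w1 ++ l ++ w2)).

(* equality of morphisms of the fundamental groupoid with initial object om *)
Definition geq {G : RAGoG} (om : V G) : relation (list (letter G)) :=
  clos_refl_trans _ (step om).

Definition gen {G : RAGoG} (v : V G) (l : letter G) : Prop :=
  (exists e, l = Arr e /\ src e = v) \/
  (exists i (a : Gv v), l = Elt v a /\ fac (Gv v) i a /\ a <> gone).

Definition adjX {G : RAGoG} (om : V G) (x y : list (letter G)) : Prop :=
  valid_from om y /\
  exists v, wpath om x v /\ exists l, gen v l /\ geq om y (x ++ [l]).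

(* edges of X are (unordered) pairs of adjacent vertices, up to geq *)
Definition edgeX {G : RAGoG} := (list (letter G) * list (letter G))%type.

Definition same_edge {G : RAGoG} (om : V G) (p q : edgeX) : Prop :=
  (geq om (fst p) (fst q) /\ geq om (snd p) (snd q)) \/
  (geq om (fst p) (snd q) /\ geq om (snd p) (fst q)).

Definition labelled_factor {G : RAGoG} (om : V G) (p : edgeX) (u : V G)
    (i : vI (Gv u)) : Prop :=
  let lab (x y : list (letter G)) :=
      wpath om x u /\ valid_from om y /\
      exists a : Gv u, fac (Gv u) i a /\ a <> gone /\ geq om y (x ++ [Elt u a]) in
  lab (fst p) (snd p) \/ lab (snd p) (fst p).

Definition in_triangle_rel {G : RAGoG} (om : V G) (p q : edgeX) : Prop :=
  exists a b c,
    adjX om a b /\ adjX om b c /\ adjX om a c /\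
    ~ geq om a b /\ ~ geq om b c /\ ~ geq om a c /\
    (same_edge om p (a, b) \/ same_edge om p (b, c) \/ same_edge om p (a, c)) /\
    (same_edge om q (a, b) \/ same_edge om q (b, c) \/ same_edge om q (a, c)).

Definition opposite_rel {G : RAGoG} (om : V G) (p q : edgeX) : Prop :=
  exists a b c d,
    adjX om a b /\ adjX om b c /\ adjX om c d /\ adjX om d a /\
    ~ adjX om a c /\ ~ adjX om b d /\
    ~ geq om a b /\ ~ geq om b c /\ ~ geq om c d /\ ~ geq om d a /\
    ~ geq om a c /\ ~ geq om b d /\
    same_edge om p (a, b) /\ same_edge om q (c, d).

Definition is_edgeX {G : RAGoG} (om : V G) (p : edgeX) : Prop :=
  adjX om (fst p) (snd p).

Definition same_hyperplane {G : RAGoG} (om : V G) : relation edgeX :=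
  clos_refl_sym_trans _ (fun p q => is_edgeX om p /\ is_edgeX om q /\
     (same_edge om p q \/ in_triangle_rel om p q \/ opposite_rel om p q)).

(* subsets are predicates; the empty predicate plays the role of the empty set *)
Definition phi_e {G : RAGoG} (e : E G) (P : Gv (src e) -> Prop) : Gv (tgt e) -> Prop :=
  fun y => (forall x, P x -> exists g, iota e g = x) /\
           exists g, P (iota e g) /\ iota_bar e g = y.

Inductive gpath {G : RAGoG} : V G -> V G -> Type :=
| gnil v : gpath v v
| gcons (e : E G) v : gpath (tgt e) v -> gpath (src e) v.

Fixpoint phi_path {G : RAGoG} {u w : V G} (p : gpath u w) :
    (Gv u -> Prop) -> (Gv w -> Prop) :=
  match p in gpath u' w' return (Gv u' -> Prop) -> (Gv w' -> Prop) with
  | gnil _ => fun P => P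
  | gcons e p' => fun P => phi_path p' (phi_e e P)
  end.

(* The fundamental groupoid acts on Bass-Serre normal forms t_1 e_1 t_2 e_2 ... e_n g, where
   t_k runs over fixed representatives of the left cosets of iota_{e_k}(G_{e_k}) in
   G_{s(e_k)} and no e_k is followed by bar e_k with t_{k+1} = 1. Each relation of the
   groupoid holds in this action and each generator acts injectively, so from an equality
   x w1 = x w2 of morphisms we can read off that w1 and w2 have the same normal form: the
   same sequence of arrows (in particular the same parity of arrows), and, for words
   without arrows, the same element of the vertex group.
   In a graph product a non-trivial element lies in at most one factor (retract onto it),
   so an edge of X carries a unique label, the three sides of a triangle carry the same
   label, and in an induced square with a side labelled A at the vertex u either all
   sides are labelled at u and the opposite side is labelled A (the square commutes in
   the graph product), or the square reads a1, e, a3, bar e with a1 = iota_e(k) and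
   a3 = iota_{bar e}(k)^-1, which says phi_e(A) = C for the label C of a3. Following the
   chain of elementary moves that defines the hyperplane and composing the paths of
   arrows gives the theorem. *)

From Stdlib Require Import List Relations Classical ClassicalEpsilon Eqdep
  FunctionalExtensionality PropExtensionality PeanoNat.
Import ListNotations.
Set Implicit Arguments.

(** * Groups and graph products *)

Arguments gmulA {g} x y z.
Arguments gmul1g {g} x.
Arguments gmulg1 {g} x.
Arguments gmulVg {g} x.
Arguments gmulgV {g} x.

Section GroupFacts.
Context {K : grp}.
Implicit Types a b x y : K.

Lemma gmul_cancel_l a x y : gmul a x = gmul a y -> x = y.
Proof.
  intro H. rewrite <- (gmul1g x), <- (gmul1g y), <- (gmulVg a), <- !gmulA, H.
  reflexivity.
Qed.

Lemma gmul_cancel_r a x y : gmul x a = gmul y a -> x = y.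
Proof.
  intro H. rewrite <- (gmulg1 x), <- (gmulg1 y), <- (gmulgV a), !gmulA, H.
  reflexivity.
Qed.

Lemma ginv_unique_r a b : gmul a b = gone -> b = ginv a.
Proof. intro H. apply (gmul_cancel_l a). rewrite H, gmulgV. reflexivity. Qed.

Lemma ginv_unique_l a b : gmul a b = gone -> a = ginv b.
Proof. intro H. apply (gmul_cancel_r b). rewrite H, gmulVg. reflexivity. Qed.

Lemma ginv_one : ginv (@gone K) = gone.
Proof. symmetry. apply ginv_unique_r, gmul1g. Qed.

Lemma ginv_involutive a : ginv (ginv a) = a.
Proof. symmetry. apply ginv_unique_r, gmulVg. Qed.

Lemma ginv_neq1 a : a <> gone -> ginv a <> gone.
Proof. intros na H. apply na. rewrite <- (ginv_involutive a), H. apply ginv_one. Qed.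

End GroupFacts.

Lemma hom_gone (H K : grp) (f : H -> K) : hom f -> f gone = gone.
Proof.
  intro hf. apply (gmul_cancel_l (f gone)). rewrite <- hf, !gmulg1. reflexivity.
Qed.

Lemma hom_ginv (H K : grp) (f : H -> K) : hom f -> forall x, f (ginv x) = ginv (f x).
Proof.
  intros hf x. apply ginv_unique_r. rewrite <- hf, gmulgV. apply hom_gone; auto.
Qed.

Definition dec (P : Prop) : {P} + {~ P} := excluded_middle_informative P.

Lemma fac_retraction (K : gpgroup) (i : vI K) :
  exists F : K -> K, hom F /\ (forall a, fac K i a -> F a = a) /\
    (forall j a, j <> i -> fac K j a -> F a = gone).
Proof.
  destruct (fac_univ K (gg K) (fun j a => if dec (j = i) then a else gone))
    as [F [hF [HF _]]].
  - intros j a b _ _. destruct (dec (j = i)); auto. rewrite gmulg1; auto.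
  - intros j k a b Hjk _ _.
    destruct (dec (j = i)), (dec (k = i)); subst; rewrite ?gmulg1, ?gmul1g; auto.
    exfalso; eapply vadj_irr; eauto.
  - exists F. split; [auto|split].
    + intros a Ha. rewrite (HF i a Ha). destruct (dec (i = i)); congruence.
    + intros j a Hj Ha. rewrite (HF j a Ha). destruct (dec (j = i)); congruence.
Qed.

Section GraphProductFactors.
Context {K : gpgroup}.

Lemma fac_unique {i j : vI K} {a : K} :
  fac K i a -> fac K j a -> a <> gone -> i = j.
Proof.
  intros Hi Hj Ha. destruct (fac_retraction K i) as [F [_ [F_i F_j]]].
  apply NNPP. intro n. apply Ha. rewrite <- (F_i a Hi). apply (F_j j); auto.
Qed.

Lemma fac_mul_same_factor {i j k : vI K} {a b c : K} :
  fac K i a -> fac K j b -> fac K k c -> a <> gone -> b <> gone -> c <> gone ->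
  c = gmul a b -> j = i /\ k = i.
Proof.
  intros Ha Hb Hc na nb nc E.
  destruct (fac_retraction K i) as [F [hF [F_i F_j]]].
  assert (Fc := f_equal F E). rewrite hF, (F_i a Ha) in Fc.
  destruct (classic (j = i)) as [->|nji].
  - split; auto. apply NNPP. intro nki.
    rewrite (F_j k c nki Hc), (F_i b Hb) in Fc. apply nc. rewrite E. auto.
  - exfalso. rewrite (F_j j b nji Hb), gmulg1 in Fc.
    destruct (classic (k = i)) as [->|nki].
    + rewrite (F_i c Hc) in Fc. apply nb.
      apply (gmul_cancel_l a). rewrite gmulg1, <- E. auto.
    + rewrite (F_j k c nki Hc) in Fc. auto.
Qed.

Lemma fac_prod4_same_factor {i1 i2 i3 i4 : vI K} {a1 a2 a3 a4 : K} :
  fac K i1 a1 -> fac K i2 a2 -> fac K i3 a3 -> fac K i4 a4 -> a1 <> gone ->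
  i2 <> i1 -> i4 <> i1 -> gmul (gmul (gmul a1 a2) a3) a4 = gone -> i3 = i1.
Proof.
  intros H1 H2 H3 H4 n1 n2 n4 E.
  destruct (fac_retraction K i1) as [F [hF [F_i F_j]]].
  assert (Fc := f_equal F E).
  rewrite !hF, (hom_gone hF), (F_i _ H1), (F_j _ _ n2 H2), (F_j _ _ n4 H4) in Fc.
  apply NNPP. intro n3. rewrite (F_j _ _ n3 H3), !gmulg1 in Fc. auto.
Qed.

End GraphProductFactors.

Lemma graphical_fac_preimage (H K : gpgroup) (f : H -> K) (A : vI K) (k : H) :
  graphical f -> k <> gone -> fac K A (f k) ->
  exists A', fac H A' k /\ forall x : K, fac K A x <-> exists y, fac H A' y /\ f y = x.
Proof.
  intros [hom_f [inj_f [g [_ [_ g_fac]]]]] nk Hk.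
  assert (Hex : exists A', g A' = A).
  { (* otherwise the retraction onto A would kill f(H) *)
    apply NNPP; intro Hn.
    destruct (fac_retraction K A) as [R [hR [R_A R_j]]].
    destruct (fac_univ H (gg K) (fun _ _ => gone)) as [F0 [_ [_ F0_unique]]].
    - intros; rewrite gmulg1; auto.
    - intros; auto.
    - assert (E1 : forall x, R (f x) = F0 x).
      { apply F0_unique.
        - intros a b. rewrite hom_f, hR. auto.
        - intros j a Ha. apply (R_j (g j)); [intro e; apply Hn; eauto|].
          apply g_fac; auto. }
      assert (E2 : forall x : H, gone = F0 x).
      { apply (F0_unique (fun _ => gone)); auto. intros a b. rewrite gmulg1; auto. }
      apply nk, inj_f. rewrite (hom_gone hom_f), <- (R_A _ Hk), E1. symmetry. apply E2. }
  destruct Hex as [A' <-]. exists A'. split.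
  - destruct (proj2 (g_fac A') (f k) Hk) as [a [Ha Ea]].
    apply inj_f in Ea. subst; auto.
  - intro x. split.
    + apply (proj2 (g_fac A') x).
    + intros [y [Hy <-]]. apply (proj1 (g_fac A')); auto.
Qed.

(** * Coset representatives and normal forms *)

Lemma castG_mul (A B : gpgroup) (H : A = B) (x y : A) :
  castG H (gmul x y) = gmul (castG H x) (castG H y).
Proof. destruct H. reflexivity. Qed.

Lemma castG_refl (A : gpgroup) (H : A = A) (x : A) : castG H x = x.
Proof. rewrite (UIP_refl _ _ H). reflexivity. Qed.

Lemma castG_trans (A B C : gpgroup) (H1 : A = B) (H2 : B = C) (x : A) :
  castG H2 (castG H1 x) = castG (eq_trans H1 H2) x.
Proof. destruct H1, H2. reflexivity. Qed.

Lemma graphical_castG (H H' K : gpgroup) (Eq : H' = H) (f : H -> K) :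
  graphical f -> graphical (fun x : H' => f (castG Eq x)).
Proof. destruct Eq. auto. Qed.

Notation GV G v := (car (gg (@Gv G v))).

Section NormalForms.
Variable G : RAGoG.

Definition castGv {w w' : V G} (H : w = w') (g : GV G w) : GV G w' :=
  eq_rect w (fun v => GV G v) g w' H.

Lemma castGv_refl w (H : w = w) g : castGv H g = g.
Proof. rewrite (UIP_refl _ _ H). reflexivity. Qed.

Lemma iota_hom (e : E G) : hom (iota e).
Proof. apply (iota_graphical G e). Qed.

Lemma iota_inj (e : E G) x y : iota e x = iota e y -> x = y.
Proof. apply (iota_graphical G e). Qed.

Lemma iota_bar_hom (e : E G) : hom (iota_bar e).
Proof. intros x y. unfold iota_bar. rewrite castG_mul. apply iota_hom. Qed.

Lemma iota_bar_graphical (e : E G) : graphical (iota_bar e).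
Proof. apply graphical_castG, iota_graphical. Qed.

Definition in_iota_image (e : E G) (x : GV G (src e)) := exists h, x = iota e h.

(* Left cosets x * iota_e(G_e); the trivial coset is represented by gone,
   the others by a choice. *)
Definition coset (e : E G) (x : GV G (src e)) : GV G (src e) -> Prop :=
  fun y => exists h, y = gmul x (iota e h).
Definition coset_rep (e : E G) (x : GV G (src e)) : GV G (src e) :=
  if dec (in_iota_image e x) then gone else epsilon (inhabits gone) (coset e x).
Definition coset_part (e : E G) (x : GV G (src e)) : Ge e :=
  epsilon (inhabits gone) (fun h => x = gmul (coset_rep e x) (iota e h)).

Lemma coset_rep_in_coset e x : exists k, coset_rep e x = gmul x (iota e k).
Proof.
  unfold coset_rep. destruct (dec (in_iota_image e x)) as [[h Hh]|n].
  - exists (ginv h). rewrite (hom_ginv (iota_hom e)), Hh, gmulgV. reflexivity.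
  - apply (epsilon_spec (inhabits gone) (coset e x)). exists x, gone.
    rewrite (hom_gone (iota_hom e)), gmulg1. reflexivity.
Qed.

Lemma coset_decomp e x : x = gmul (coset_rep e x) (iota e (coset_part e x)).
Proof.
  apply (epsilon_spec (inhabits gone) (fun h => x = gmul (coset_rep e x) (iota e h))).
  destruct (coset_rep_in_coset e x) as [k ->]. exists (ginv k).
  rewrite (hom_ginv (iota_hom e)), <- gmulA, gmulgV, gmulg1. reflexivity.
Qed.

Lemma in_iota_image_mulr e x k : in_iota_image e (gmul x (iota e k)) <-> in_iota_image e x.
Proof.
  split; intros [h Hh].
  - exists (gmul h (ginv k)).
    rewrite (iota_hom e), <- Hh, (hom_ginv (iota_hom e)), <- gmulA, gmulgV, gmulg1. auto.
  - exists (gmul h k). rewrite (iota_hom e), Hh. auto.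
Qed.

Lemma coset_rep_mulr e x k : coset_rep e (gmul x (iota e k)) = coset_rep e x.
Proof.
  unfold coset_rep.
  destruct (dec (in_iota_image e (gmul x (iota e k)))) as [i1|n1];
  destruct (dec (in_iota_image e x)) as [i2|n2]; auto.
  - exfalso. apply n2, (in_iota_image_mulr e x k); auto.
  - exfalso. apply n1, (in_iota_image_mulr e x k); auto.
  - f_equal. apply functional_extensionality. intro y. apply propositional_extensionality.
    split; intros [h Hh].
    + exists (gmul k h). rewrite (iota_hom e), gmulA. auto.
    + exists (gmul (ginv k) h).
      rewrite (iota_hom e), gmulA, <- (gmulA x), (hom_ginv (iota_hom e)), gmulgV, gmulg1.
      auto.
Qed.

Lemma coset_rep_eq1 e x : coset_rep e x = gone <-> in_iota_image e x.
Proof.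
  split.
  - intro H. destruct (coset_rep_in_coset e x) as [k Hk]. rewrite H in Hk.
    exists (ginv k). rewrite (hom_ginv (iota_hom e)). apply ginv_unique_l. auto.
  - intro H. unfold coset_rep. destruct (dec (in_iota_image e x)); tauto.
Qed.

Lemma coset_rep_idem e x : coset_rep e (coset_rep e x) = coset_rep e x.
Proof.
  destruct (coset_rep_in_coset e x) as [k Hk]. rewrite Hk at 1. apply coset_rep_mulr.
Qed.

Lemma coset_part_unique e x h : x = gmul (coset_rep e x) (iota e h) -> coset_part e x = h.
Proof.
  intro H. apply (iota_inj e). apply (gmul_cancel_l (coset_rep e x)).
  rewrite <- H. symmetry. apply coset_decomp.
Qed.

Lemma coset_rep_iota e k : coset_rep e (iota e k) = gone.
Proof. apply coset_rep_eq1. exists k; auto. Qed.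

Lemma coset_part_iota e k : coset_part e (iota e k) = k.
Proof. apply coset_part_unique. rewrite coset_rep_iota, gmul1g. auto. Qed.

(* [ncons e t r] stands for the morphism t . e . r, where t should be a coset
   representative of iota_e(G_e) in G_{s(e)}. *)
Inductive nf : V G -> Type :=
| nend (v : V G) (g : GV G v) : nf v
| ncons (e : E G) (t : GV G (src e)) (r : nf (tgt e)) : nf (src e).

(* Left multiplication by g: g t = t' iota_e(h) with t' the new representative,
   and iota_{bar e}(h) is pushed across e. *)
Fixpoint nf_mul {u} (r : nf u) : GV G u -> nf u :=
  match r in nf u0 return GV G u0 -> nf u0 with
  | nend v g' => fun g => nend v (gmul g g')
  | ncons e t rest => fun g =>
      ncons e (coset_rep e (gmul g t)) (nf_mul rest (iota_bar e (coset_part e (gmul g t))))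
  end.

Definition backtracks (e : E G) {w} (r : nf w) : Prop :=
  match r with nend _ _ => False | ncons e2 t2 _ => e2 = bar e /\ t2 = gone end.

Fixpoint reduced {w} (r : nf w) : Prop :=
  match r with
  | nend _ _ => True
  | ncons e t rest => coset_rep e t = t /\ ~ backtracks e rest /\ reduced rest
  end.

Lemma nf_mul_mul w (r : nf w) : forall g h, nf_mul (nf_mul r h) g = nf_mul r (gmul g h).
Proof.
  induction r as [v g'|e t rest IH]; intros g h; simpl.
  - rewrite gmulA. auto.
  - rewrite IH, <- (iota_bar_hom e).
    assert (E1 : coset_rep e (gmul g (coset_rep e (gmul h t)))
                 = coset_rep e (gmul (gmul g h) t)).
    { destruct (coset_rep_in_coset e (gmul h t)) as [k ->].
      rewrite gmulA, coset_rep_mulr, gmulA. auto. }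
    assert (E2 : coset_part e (gmul (gmul g h) t)
                 = gmul (coset_part e (gmul g (coset_rep e (gmul h t))))
                        (coset_part e (gmul h t))).
    { apply coset_part_unique. rewrite <- E1, (iota_hom e), gmulA.
      rewrite <- (coset_decomp e (gmul g (coset_rep e (gmul h t)))).
      rewrite <- (gmulA g (coset_rep e (gmul h t))), <- (coset_decomp e (gmul h t)), gmulA.
      reflexivity. }
    rewrite E1, E2. auto.
Qed.

Lemma nf_mul1 w (r : nf w) : reduced r -> nf_mul r gone = r.
Proof.
  induction r as [v g'|e t rest IH]; simpl; intro Hv.
  - rewrite gmul1g. auto.
  - destruct Hv as [Ht [_ Hr]]. rewrite gmul1g, Ht.
    assert (E : coset_part e t = gone).
    { apply coset_part_unique. rewrite Ht, (hom_gone (iota_hom e)), gmulg1. auto. }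
    rewrite E, (hom_gone (iota_bar_hom e)), IH; auto.
Qed.

Definition in_iota_bar_image (e : E G) {w} (g : GV G w) : Prop :=
  exists (H : src (bar e) = w) k, g = castGv H (iota (bar e) k).

Lemma backtracks_nf_mul w (r : nf w) (g : GV G w) e :
  reduced r -> in_iota_bar_image e g -> backtracks e (nf_mul r g) -> backtracks e r.
Proof.
  destruct r as [v g'|e2 t2 rest]; simpl; auto.
  intros [Hr _] [H [k Hk]] [He Ht]. subst e2. rewrite castGv_refl in Hk. subst g.
  split; auto. apply coset_rep_eq1 in Ht. rewrite <- Hr. apply coset_rep_eq1.
  destruct Ht as [h Hh]. exists (gmul (ginv k) h).
  rewrite (iota_hom (bar e)), <- Hh, gmulA, (hom_ginv (iota_hom (bar e))), gmulVg, gmul1g.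
  auto.
Qed.

Lemma reduced_nf_mul w (r : nf w) : forall g, reduced r -> reduced (nf_mul r g).
Proof.
  induction r as [v g'|e t rest IH]; simpl; auto.
  intros g [Ht [Hn Hr]]. split; [apply coset_rep_idem|]. split; [|apply IH; auto].
  intro Hh. apply Hn. eapply backtracks_nf_mul; eauto.
  exists eq_refl, (castG (eq_sym (Ge_bar G e)) (coset_part e (gmul g t))). reflexivity.
Qed.

End NormalForms.
Arguments castGv {G w w'}.
Arguments coset_rep {G}.
Arguments coset_part {G}.
Arguments nf_mul {G u}.
Arguments backtracks {G} e {w}.
Arguments reduced {G w}.
Arguments nend {G}.
Arguments ncons {G}.

(** * The action of the generators on normal forms *)

Section Action.
Variable G : RAGoG.

Definition NF := {w : V G & nf G w}.

Definition castV {w w' : V G} (H : w = w') (r : nf G w) : nf G w' := eq_rect w (nf G) r w' H.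

Definition backtrack_tail (e : E G) {w} (r : nf G w) : option NF :=
  match r with
  | nend _ _ => None
  | ncons e2 t2 rest =>
      if dec (e2 = bar e /\ t2 = gone) then Some (existT (nf G) (tgt e2) rest) else None
  end.

(* The arrow e acts by prepending e, or by cancelling a leading bar e; the junk
   cases (wrong object) act trivially. *)
Definition act_arr (e : E G) (x : NF) : NF :=
  match backtrack_tail e (projT2 x) with
  | Some y => y
  | None => match dec (projT1 x = tgt e) with
            | left H => existT (nf G) (src e) (ncons e gone (castV H (projT2 x)))
            | right _ => x end
  end.

Definition act (l : letter G) (x : NF) : NF :=
  match l with
  | Elt u g => match dec (projT1 x = u) with
               | left H => existT (nf G) (projT1 x) (nf_mul (projT2 x) (castGv (eq_sym H) g))
               | right _ => x end
  | Arr e => act_arr e x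
  end.

Definition reduced_at (w : V G) (x : NF) := projT1 x = w /\ reduced (projT2 x).

Lemma existT_castV w w' (H : w = w') r : existT (nf G) w' (castV H r) = existT (nf G) w r.
Proof. destruct H. reflexivity. Qed.

Lemma backtracks_castV e w w' (H : w = w') (r : nf G w) :
  backtracks e (castV H r) <-> backtracks e r.
Proof. destruct H. tauto. Qed.

Lemma reduced_castV w w' (H : w = w') (r : nf G w) : reduced (castV H r) <-> reduced r.
Proof. destruct H. tauto. Qed.

Lemma backtracks_bar_eq e1 e2 w (r : nf G w) :
  bar e1 = bar e2 -> backtracks e1 r -> backtracks e2 r.
Proof. destruct r; simpl; auto. intros H [H1 H2]. rewrite <- H. auto. Qed.

Lemma backtrack_tail_None e w (r : nf G w) : backtrack_tail e r = None <-> ~ backtracks e r.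
Proof.
  destruct r as [v g|e2 t2 rest]; simpl; [split; auto|].
  destruct (dec (e2 = bar e /\ t2 = gone)); split; intros; try discriminate; tauto.
Qed.

Lemma act_Elt_at u (r : nf G u) g :
  act (Elt u g) (existT (nf G) u r) = existT (nf G) u (nf_mul r g).
Proof.
  simpl. destruct (dec (u = u)) as [H|n]; [|congruence]. rewrite castGv_refl. auto.
Qed.

Lemma act_Elt_other u g x : projT1 x <> u -> act (Elt u g) x = x.
Proof. intro n. simpl. destruct (dec (projT1 x = u)); tauto. Qed.

Lemma act_Arr_push e (r : nf G (tgt e)) : ~ backtracks e r ->
  act (Arr e) (existT (nf G) (tgt e) r) = existT (nf G) (src e) (ncons e gone r).
Proof.
  intro n. apply backtrack_tail_None in n. simpl. unfold act_arr. simpl. rewrite n.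
  destruct (dec (tgt e = tgt e)) as [H|H]; [|congruence]. rewrite (UIP_refl _ _ H). auto.
Qed.

Lemma act_Arr_cancel e (rest : nf G (tgt (bar e))) :
  act (Arr e) (existT (nf G) (src (bar e)) (ncons (bar e) gone rest))
  = existT (nf G) (tgt (bar e)) rest.
Proof.
  simpl. unfold act_arr. simpl.
  destruct (dec (bar e = bar e /\ gone = gone)) as [_|n]; auto. exfalso; auto.
Qed.

Lemma coset_rep_gone e : coset_rep e (gone : GV G (src e)) = gone.
Proof. apply coset_rep_eq1. exists gone. rewrite (hom_gone (iota_hom G e)). auto. Qed.

Lemma reduced_act l x : reduced (projT2 x) -> reduced (projT2 (act l x)).
Proof.
  destruct x as [w r]. destruct l as [e|u g]; simpl.
  - unfold act_arr. simpl. destruct (backtrack_tail e r) eqn:Ec.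
    + destruct r as [v g0|e2 t2 rest]; simpl in Ec; [discriminate|].
      destruct (dec (e2 = bar e /\ t2 = gone)); [|discriminate].
      injection Ec as <-. simpl. tauto.
    + destruct (dec (w = tgt e)) as [H|H]; simpl; auto. intro Hv.
      split; [apply coset_rep_gone|]. split.
      * rewrite backtracks_castV. apply backtrack_tail_None; auto.
      * apply reduced_castV; auto.
  - destruct (dec (w = u)); simpl; auto. intro; apply reduced_nf_mul; auto.
Qed.

Lemma act_rel_mul v (g h : GV G v) x :
  act (Elt v g) (act (Elt v h) x) = act (Elt v (gmul g h)) x.
Proof.
  destruct x as [w r]. destruct (classic (w = v)) as [<-|H].
  - rewrite !act_Elt_at, nf_mul_mul. auto.
  - rewrite (act_Elt_other h (existT _ w r) H), (act_Elt_other g (existT _ w r) H).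
    rewrite (act_Elt_other (gmul g h) (existT _ w r) H). auto.
Qed.

Lemma act_rel_one v x : reduced_at v x -> act (Elt v gone) x = x.
Proof.
  destruct x as [w r]. intros [H Hv]. simpl in H, Hv. subst w.
  rewrite act_Elt_at, nf_mul1; auto.
Qed.

Lemma existT_ncons_eq e' e (K : e' = e) (rest : nf G (tgt e')) (H : tgt e' = tgt e) :
  existT (nf G) (src e) (ncons e gone (castV H rest))
  = existT (nf G) (src e') (ncons e' gone rest).
Proof. subst e'. rewrite (UIP_refl _ _ H). auto. Qed.

Lemma act_rel_bar e x : reduced_at (tgt (bar e)) x -> act (Arr e) (act (Arr (bar e)) x) = x.
Proof.
  destruct x as [w r]. intros [Hw Hv]. simpl in Hw, Hv.
  simpl. unfold act_arr at 2. simpl. destruct (backtrack_tail (bar e) r) eqn:Ec.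
  - destruct r as [v g0|e2 t2 rest]; simpl in Ec; [discriminate|].
    destruct (dec (e2 = bar (bar e) /\ t2 = gone)) as [[-> ->]|]; [|discriminate].
    injection Ec as <-. destruct Hv as [_ [Hn _]].
    unfold act_arr. simpl.
    assert (Ec2 : backtrack_tail e rest = None).
    { apply backtrack_tail_None. intro Hh. apply Hn.
      eapply backtracks_bar_eq; [|exact Hh]. rewrite !bar_invol. auto. }
    rewrite Ec2. destruct (dec (tgt (bar (bar e)) = tgt e)) as [H|H].
    + apply existT_ncons_eq, bar_invol.
    + exfalso. apply H. rewrite bar_invol. auto.
  - destruct (dec (w = tgt (bar e))) as [H|H]; [|tauto]. simpl.
    unfold act_arr. simpl.
    destruct (dec (bar e = bar e /\ gone = gone)) as [_|n]; [|exfalso; auto].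
    apply existT_castV.
Qed.

Lemma castGv_iota e' e (K : e' = e) (H : src e' = src e) x y :
  castG (f_equal (@Ge G) K) x = y -> castGv (eq_sym H) (iota e y) = iota e' x.
Proof. subst e'. intro E. simpl in E. subst y. rewrite (UIP_refl _ _ H). auto. Qed.

Lemma act_rel_edge e g x : reduced_at (tgt e) x ->
  act (Elt (src e) (iota e g)) (act (Arr e) x)
  = act (Arr e) (act (Elt (tgt e) (iota_bar e g)) x).
Proof.
  destruct x as [w r]. intros [Hw Hv]. simpl in Hw, Hv.
  destruct (backtrack_tail e r) eqn:Ec.
  - destruct r as [v g0|e2 t2 rest]; simpl in Ec; [discriminate|].
    destruct (dec (e2 = bar e /\ t2 = gone)) as [[-> ->]|]; [|discriminate].
    injection Ec as <-.
    rewrite act_Arr_cancel, act_Elt_at. simpl nf_mul. rewrite gmulg1.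
    change (iota_bar e g) with (iota (bar e) (castG (eq_sym (Ge_bar G e)) g)).
    rewrite coset_rep_iota, coset_part_iota, act_Arr_cancel.
    simpl. destruct (dec (tgt (bar e) = src e)) as [H|H].
    + simpl. do 2 f_equal. unfold iota_bar.
      apply (castGv_iota (bar_invol G e)). rewrite !castG_trans. apply castG_refl.
    + exfalso. apply H. unfold tgt. rewrite bar_invol. auto.
  - subst w. assert (Hn : ~ backtracks e r) by (apply backtrack_tail_None; auto).
    rewrite act_Arr_push, !act_Elt_at; auto. simpl nf_mul.
    rewrite gmulg1, coset_rep_iota, coset_part_iota, act_Arr_push; auto.
    intro Hh. apply Hn. eapply backtracks_nf_mul; eauto.
    exists eq_refl. eexists. reflexivity.
Qed.

End Action.

(** * Words and the invariance of their action *)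

Section Words.
Variable G : RAGoG.
Implicit Types (a b c u v om : V G) (w z xs ys : list (letter G)) (x y : NF G).

Fixpoint act_word w x : NF G :=
  match w with [] => x | l :: w' => act l (act_word w' x) end.

Definition nf_base v : NF G := existT (nf G) v (nend v gone).

(* The normal form of the morphism w, for w a word ending at v. *)
Definition eval_word v w : NF G := act_word w (nf_base v).

Definition lsrc (l : letter G) : V G := match l with Arr e => src e | Elt u _ => u end.
Definition ltgt (l : letter G) : V G := match l with Arr e => tgt e | Elt u _ => u end.

Lemma wpath_cons a l w b : wpath a (l :: w) b <-> a = lsrc l /\ wpath (ltgt l) w b.
Proof.
  split.
  - intro H. inversion H; subst; simpl; auto.
  - intros [-> Hw]. destruct l; simpl in *; constructor; auto.
Qed.

Lemma wpath_nil a b : wpath a [] b <-> a = b.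
Proof. split; [intro H; inversion H; auto|intros ->; constructor]. Qed.

Lemma wpath_single l : wpath (lsrc l) [l] (ltgt l).
Proof. apply wpath_cons. split; auto. apply wpath_nil; auto. Qed.

Lemma wpath_app a w1 w2 c : wpath a (w1 ++ w2) c <-> exists b, wpath a w1 b /\ wpath b w2 c.
Proof.
  revert a. induction w1 as [|l w1 IH]; intro a; simpl.
  - split; [intro H; exists a; split; auto; constructor|].
    intros [b [H1 H2]]. apply wpath_nil in H1. subst; auto.
  - rewrite wpath_cons. split.
    + intros [Ha H]. apply IH in H. destruct H as [b [H1 H2]].
      exists b. split; auto. apply wpath_cons; auto.
    + intros [b [H1 H2]]. apply wpath_cons in H1. destruct H1 as [Ha H1].
      split; auto. apply IH. eauto.
Qed.

Lemma wpath_snoc a w l : wpath a w (lsrc l) -> wpath a (w ++ [l]) (ltgt l).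
Proof. intro H. apply wpath_app. exists (lsrc l). split; auto. apply wpath_single. Qed.

Lemma wpath_det a w b b' : wpath a w b -> wpath a w b' -> b = b'.
Proof.
  intro H. revert b'. induction H; intros b' H'.
  - apply wpath_nil in H'. auto.
  - apply wpath_cons in H'. apply IHwpath, H'.
  - apply wpath_cons in H'. apply IHwpath, H'.
Qed.

Lemma act_word_app w1 w2 x : act_word (w1 ++ w2) x = act_word w1 (act_word w2 x).
Proof. induction w1; simpl; congruence. Qed.

Lemma reduced_at_act l x : reduced_at (ltgt l) x -> reduced_at (lsrc l) (act l x).
Proof.
  intro H. split; [|apply reduced_act, H].
  destruct x as [w r]. destruct H as [Hw Hv]. simpl in Hw, Hv.
  destruct l as [e|u g]; simpl in *.
  - unfold act_arr. simpl. destruct (backtrack_tail e r) eqn:Ec.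
    + destruct r as [v g0|e2 t2 rest]; simpl in Ec; [discriminate|].
      destruct (dec (e2 = bar e /\ t2 = gone)) as [[-> _]|]; [|discriminate].
      injection Ec as <-. simpl. unfold tgt. rewrite bar_invol. auto.
    + destruct (dec (w = tgt e)); simpl; tauto.
  - subst w. destruct (dec (u = u)); simpl; tauto.
Qed.

Lemma reduced_at_act_word a w b x : wpath a w b -> reduced_at b x -> reduced_at a (act_word w x).
Proof.
  intro H. induction H; simpl; intro Hx; auto.
  - apply (reduced_at_act (Arr e)). simpl. auto.
  - apply (reduced_at_act (Elt u g)). simpl. auto.
Qed.

Lemma nf_base_reduced v : reduced_at v (nf_base v).
Proof. split; simpl; auto. Qed.

Lemma eval_word_reduced a w b : wpath a w b -> reduced_at a (eval_word b w).
Proof. intro H. apply (reduced_at_act_word H), nf_base_reduced. Qed.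

Lemma rel_pair_wpath l r a b : rel_pair l r -> wpath a l b -> wpath a r b.
Proof.
  intro Hr. destruct Hr; rewrite ?wpath_cons, ?wpath_nil; simpl;
    rewrite ?wpath_cons, ?wpath_nil; simpl; try (unfold tgt; rewrite bar_invol);
    intuition (subst; auto).
Qed.

Lemma rel_pair_act_word l r a b x :
  rel_pair l r -> wpath a l b -> reduced_at b x -> act_word l x = act_word r x.
Proof.
  intros Hr Hp Hx. destruct Hr; cbn [act_word].
  - apply act_rel_mul.
  - apply wpath_cons in Hp. destruct Hp as [_ Hp]. apply wpath_nil in Hp. subst.
    apply act_rel_one. auto.
  - apply wpath_cons in Hp. destruct Hp as [_ Hp]. apply wpath_cons in Hp.
    destruct Hp as [_ Hp]. apply wpath_nil in Hp. simpl in Hp. subst. apply act_rel_bar. auto.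
  - apply wpath_cons in Hp. destruct Hp as [_ Hp]. apply wpath_cons in Hp.
    destruct Hp as [_ Hp]. apply wpath_nil in Hp. simpl in Hp. subst. apply act_rel_edge. auto.
Qed.

Lemma step_eval om w w' v : step om w w' -> wpath om w v ->
  eval_word v w = eval_word v w' /\ wpath om w' v.
Proof.
  intros [_ [Hv' [w1 [w2 [l [r [Hr Hc]]]]]]] Hp.
  destruct Hc as [[-> ->]|[-> ->]];
    apply wpath_app in Hp; destruct Hp as [b1 [P1 P2]];
    apply wpath_app in P2; destruct P2 as [b2 [P2 P3]];
    unfold eval_word; rewrite !act_word_app.
  - split.
    + f_equal. eapply rel_pair_act_word; eauto. apply eval_word_reduced; auto.
    + apply wpath_app. exists b1. split; auto. apply wpath_app. exists b2.
      split; auto. apply (rel_pair_wpath Hr); auto.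
  - destruct Hv' as [v' Q]. apply wpath_app in Q. destruct Q as [b1' [Q1 Q2]].
    apply wpath_app in Q2. destruct Q2 as [b2' [Q2 Q3]].
    rewrite (wpath_det Q1 P1) in Q2. rewrite <- (wpath_det (rel_pair_wpath Hr Q2) P2) in P3.
    split.
    + f_equal. symmetry. eapply rel_pair_act_word; eauto. apply eval_word_reduced; auto.
    + apply wpath_app. exists b1. split; auto. apply wpath_app. eauto.
Qed.

Lemma geq_eval om w w' v : geq om w w' -> wpath om w v ->
  eval_word v w = eval_word v w' /\ wpath om w' v.
Proof.
  intro H. revert v. induction H; intros v Hp.
  - eapply step_eval; eauto.
  - auto.
  - destruct (IHclos_refl_trans1 v Hp) as [E1 P1].
    destruct (IHclos_refl_trans2 v P1) as [E2 P2]. split; congruence.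
Qed.

Lemma geq_wpath om w w' v : geq om w w' -> wpath om w v -> wpath om w' v.
Proof. intros H P. apply (geq_eval H P). Qed.

Lemma geq_sym om w w' : geq om w w' -> geq om w' w.
Proof.
  intro H. induction H as [w w' [H1 [H2 [w1 [w2 [l [r [Hr Hc]]]]]]]| |].
  - apply rt_step. split; auto. split; auto. exists w1, w2, l, r. split; auto. tauto.
  - apply rt_refl.
  - eapply rt_trans; eauto.
Qed.

Lemma act_inj l x y : reduced_at (ltgt l) x -> reduced_at (ltgt l) y -> act l x = act l y -> x = y.
Proof.
  intros Hx Hy E. destruct l as [e|u g]; cbn [ltgt] in Hx, Hy.
  - pose proof (act_rel_bar (bar e)) as RB. rewrite (bar_invol G e) in RB.
    rewrite <- (RB x Hx), <- (RB y Hy), E. auto.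
  - rewrite <- (act_rel_one Hx), <- (act_rel_one Hy), <- (gmulVg g), <- !act_rel_mul, E. auto.
Qed.

Lemma act_word_inj a w b x y : wpath a w b -> reduced_at b x -> reduced_at b y ->
  act_word w x = act_word w y -> x = y.
Proof.
  intro H. induction H; simpl; intros Hx Hy E; auto.
  - apply IHwpath; auto.
    apply (act_inj (Arr e)); simpl; auto; apply (reduced_at_act_word H); auto.
  - apply IHwpath; auto.
    apply (act_inj (Elt u g)); simpl; auto; apply (reduced_at_act_word H); auto.
Qed.

Lemma eval_word_cancel_prefix om xs u w1 w2 v : geq om (xs ++ w1) (xs ++ w2) ->
  wpath om xs u -> wpath u w1 v -> wpath u w2 v -> eval_word v w1 = eval_word v w2.
Proof.
  intros H P P1 P2. assert (Q : wpath om (xs ++ w1) v) by (apply wpath_app; eauto).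
  destruct (geq_eval H Q) as [E _]. unfold eval_word in E. rewrite !act_word_app in E.
  apply (act_word_inj P); auto; apply eval_word_reduced; auto.
Qed.

Lemma geq_app_r om w w' v z c : geq om w w' -> wpath om w v -> wpath v z c ->
  geq om (w ++ z) (w' ++ z).
Proof.
  intro H. revert v. induction H; intros v P Pz.
  - apply rt_step. destruct (step_eval H P) as [_ P'].
    destruct H as [_ [_ [w1 [w2 [l [r [Hr Hc]]]]]]].
    split; [exists c; apply wpath_app; eauto|].
    split; [exists c; apply wpath_app; eauto|].
    exists w1, (w2 ++ z), l, r. split; auto.
    destruct Hc as [[-> ->]|[-> ->]]; [left|right]; rewrite <- !app_assoc; auto.
  - apply rt_refl.
  - eapply rt_trans; [eapply IHclos_refl_trans1; eauto|].
    eapply IHclos_refl_trans2; eauto. eapply geq_wpath; eauto.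
Qed.

Lemma geq_rel om xs l r z c : rel_pair l r -> wpath om (xs ++ l ++ z) c ->
  geq om (xs ++ l ++ z) (xs ++ r ++ z).
Proof.
  intros Hr P. apply rt_step. split; [exists c; auto|]. split.
  - exists c. apply wpath_app in P. destruct P as [b1 [P1 P2]].
    apply wpath_app in P2. destruct P2 as [b2 [P2 P3]].
    apply wpath_app. exists b1. split; auto. apply wpath_app. exists b2.
    split; auto. apply (rel_pair_wpath Hr); auto.
  - exists xs, z, l, r. split; auto.
Qed.

Lemma geq_rel_last om xs l r c : rel_pair l r -> wpath om (xs ++ l) c ->
  geq om (xs ++ l) (xs ++ r).
Proof.
  intros Hr P. pose proof (@geq_rel om xs l r [] c Hr) as H. rewrite !app_nil_r in H. auto.
Qed.

End Words.

(** * Invariants read off normal forms *)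

Section Invariants.
Variable G : RAGoG.
Implicit Types (u v om : V G) (w xs ys : list (letter G)) (x y : NF G).

Fixpoint nf_edges {wv} (r : nf G wv) : list (E G) :=
  match r with nend _ _ => [] | ncons e _ rest => e :: nf_edges rest end.
Definition edges x := nf_edges (projT2 x).

Lemma nf_edges_nf_mul wv (r : nf G wv) g : nf_edges (nf_mul r g) = nf_edges r.
Proof. revert g. induction r; intro; simpl; f_equal; auto. Qed.

Lemma edges_act_Elt u g x : edges (act (Elt u g) x) = edges x.
Proof.
  destruct x as [wv r]. unfold edges. simpl.
  destruct (dec (wv = u)); simpl; auto. apply nf_edges_nf_mul.
Qed.

Lemma edges_act_Arr e x : reduced_at (tgt e) x ->
  (~ backtracks e (projT2 x) /\ edges (act (Arr e) x) = e :: edges x) \/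
  (backtracks e (projT2 x) /\ edges x = bar e :: edges (act (Arr e) x)).
Proof.
  destruct x as [wv r]. intros [Hw Hv]. simpl in Hw, Hv. simpl projT2.
  destruct (backtrack_tail e r) eqn:Ec.
  - right. destruct r as [v g0|e2 t2 rest]; simpl in Ec; [discriminate|].
    destruct (dec (e2 = bar e /\ t2 = gone)) as [[-> ->]|]; [|discriminate].
    injection Ec as <-. simpl. split; auto. unfold edges. simpl. unfold act_arr. simpl.
    destruct (dec (bar e = bar e /\ gone = gone)) as [_|n]; [auto|exfalso; auto].
  - left. subst wv. assert (Hn : ~ backtracks e r) by (apply backtrack_tail_None; auto).
    split; auto. unfold edges. rewrite act_Arr_push; auto.
Qed.

Lemma edges_eval_Elt v u a w : edges (eval_word v (Elt u a :: w)) = edges (eval_word v w).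
Proof. apply edges_act_Elt. Qed.

Lemma edges_eval_Arr v e w : wpath (tgt e) w v ->
  hd_error (edges (eval_word v w)) <> Some (bar e) ->
  edges (eval_word v (Arr e :: w)) = e :: edges (eval_word v w).
Proof.
  intros P Hd. destruct (edges_act_Arr e (eval_word_reduced P)) as [[_ E]|[_ E]]; auto.
  exfalso. apply Hd. unfold eval_word in *. rewrite E. reflexivity.
Qed.

Lemma nend_inj u (g g' : GV G u) :
  existT (nf G) u (nend u g) = existT (nf G) u (nend u g') -> g = g'.
Proof. intro H. apply inj_pairT2 in H. injection H as H. apply inj_pairT2 in H. auto. Qed.

Lemma act_Elt_nend u (a g : GV G u) :
  act (Elt u a) (existT (nf G) u (nend u g)) = existT (nf G) u (nend u (gmul a g)).
Proof. apply act_Elt_at. Qed.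

Lemma eval_Elt u (a : GV G u) : eval_word u [Elt u a] = existT (nf G) u (nend u a).
Proof. unfold eval_word, nf_base. cbn [act_word]. rewrite act_Elt_nend, gmulg1. auto. Qed.

Fixpoint num_arrows w : nat :=
  match w with [] => 0 | Arr _ :: w' => S (num_arrows w') | Elt _ _ :: w' => num_arrows w' end.

Lemma even_edges_eval a w b :
  wpath a w b -> Nat.even (length (edges (eval_word b w))) = Nat.even (num_arrows w).
Proof.
  intro P. induction P as [v|e w v P IH|u g w v P IH].
  - reflexivity.
  - simpl num_arrows. rewrite Nat.even_succ, <- Nat.negb_even, <- IH.
    change (eval_word v (Arr e :: w)) with (act (Arr e) (eval_word v w)).
    destruct (edges_act_Arr e (eval_word_reduced P)) as [[_ ->]|[_ ->]].
    + simpl length. rewrite Nat.even_succ, <- Nat.negb_even. auto.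
    + simpl length.
      rewrite Nat.even_succ, <- Nat.negb_even, Bool.negb_involutive. auto.
  - rewrite edges_eval_Elt. auto.
Qed.

Lemma eval_word_even_arrows u b w1 w2 : wpath u w1 b -> wpath u w2 b ->
  eval_word b w1 = eval_word b w2 -> Nat.even (num_arrows w1) = Nat.even (num_arrows w2).
Proof.
  intros P1 P2 E. rewrite <- (even_edges_eval P1), <- (even_edges_eval P2), E. auto.
Qed.

End Invariants.

(** * Edges of X and their labels *)

Section Labels.
Variable G : RAGoG.
Variable om : V G.
Implicit Types (u v : V G) (w xs ys zs : list (letter G)).

Definition linv (l : letter G) : letter G :=
  match l with Arr e => Arr (bar e) | Elt u g => Elt u (ginv g) end.

Lemma lsrc_linv l : lsrc (linv l) = ltgt l.
Proof. destruct l; reflexivity. Qed.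

Lemma geq_cancel_linv xs l : wpath om xs (lsrc l) -> geq om (xs ++ [l; linv l]) xs.
Proof.
  intro P. destruct l as [e|u g]; simpl in P.
  - pose proof (@geq_rel_last G om xs [Arr e; Arr (bar e)] [] (tgt (bar e))) as H.
    rewrite app_nil_r in H. apply H; [constructor|].
    apply wpath_app. exists (src e). split; auto.
    apply wpath_cons. split; auto. apply (wpath_single (Arr (bar e))).
  - eapply rt_trans.
    + apply (@geq_rel_last G om xs [Elt u g; Elt u (ginv g)] [Elt u (gmul g (ginv g))] u).
      * constructor.
      * apply wpath_app. exists u. split; auto.
        apply wpath_cons. split; auto. apply (wpath_single (Elt u (ginv g))).
    + rewrite gmulgV. pose proof (@geq_rel_last G om xs [Elt u gone] [] u) as H.
      rewrite app_nil_r in H. apply H; [constructor|]. apply (wpath_snoc (Elt u gone)). auto.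
Qed.

Lemma geq_snoc_linv xs ys l : wpath om xs (lsrc l) -> geq om ys (xs ++ [l]) ->
  geq om xs (ys ++ [linv l]).
Proof.
  intros P E. apply geq_sym. eapply rt_trans.
  - apply (geq_app_r (v := ltgt l) (z := [linv l]) (c := ltgt (linv l)) E).
    + apply (geq_wpath (geq_sym E)). apply wpath_snoc. auto.
    + rewrite <- lsrc_linv. apply wpath_single.
  - rewrite <- app_assoc. simpl. apply geq_cancel_linv. auto.
Qed.

Lemma geq_snoc_app {xs ws ys} l : geq om ys (xs ++ ws) -> wpath om ys (lsrc l) ->
  geq om (ys ++ [l]) (xs ++ ws ++ [l]).
Proof. intros E P. rewrite app_assoc. apply (geq_app_r E P (wpath_single l)). Qed.

Lemma geq_walk_snoc {xs ws ys zs} l : geq om ys (xs ++ ws) -> geq om zs (ys ++ [l]) ->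
  wpath om ys (lsrc l) -> geq om zs (xs ++ ws ++ [l]).
Proof. intros E E' P. apply rt_trans with (ys ++ [l]); auto. apply geq_snoc_app; auto. Qed.

Lemma geq_backtrack {xs} ws e : wpath om (xs ++ ws) (src e) ->
  geq om (xs ++ ws ++ [Arr e; Arr (bar e)]) (xs ++ ws).
Proof. intro P. rewrite app_assoc. exact (geq_cancel_linv (Arr e) P). Qed.

Lemma geq_snoc_cancel {xs ys} l : geq om (xs ++ [l]) (ys ++ [l]) -> wpath om xs (lsrc l) ->
  geq om xs ys.
Proof.
  intros E P.
  assert (Px : wpath om (xs ++ [l]) (ltgt l)) by (apply wpath_snoc; auto).
  assert (Py := geq_wpath E Px). apply wpath_app in Py. destruct Py as [m [Py Pl]].
  apply wpath_cons in Pl. destruct Pl as [-> _].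
  assert (Pi : wpath (ltgt l) [linv l] (ltgt (linv l)))
    by (rewrite <- lsrc_linv; apply wpath_single).
  pose proof (geq_app_r E Px Pi) as C. rewrite <- !app_assoc in C. simpl in C.
  apply rt_trans with (xs ++ [l; linv l]); [apply geq_sym, geq_cancel_linv; auto|].
  apply rt_trans with (ys ++ [l; linv l]); auto. apply geq_cancel_linv. auto.
Qed.

Lemma gen_lsrc v l : gen v l -> lsrc l = v.
Proof. intros [[e [-> <-]]|[i [g [-> _]]]]; auto. Qed.

Lemma gen_linv v l : gen v l -> gen (ltgt l) (linv l).
Proof.
  intros [[e [-> <-]]|[i [g [-> [Hg ng]]]]]; simpl.
  - left. exists (bar e). auto.
  - right. exists i, (ginv g). split; auto. split; [apply fac_inv; auto|apply ginv_neq1; auto].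
Qed.

Lemma adjX_step xs ys v : adjX om xs ys -> wpath om xs v ->
  exists l, gen v l /\ geq om ys (xs ++ [l]) /\ wpath om ys (ltgt l).
Proof.
  intros [_ [v' [P [l [Hg E]]]]] P'. rewrite (wpath_det P P') in Hg.
  exists l. split; auto. split; auto.
  apply (geq_wpath (geq_sym E)). apply wpath_snoc. rewrite (gen_lsrc Hg). auto.
Qed.

Lemma adjX_step_walk {x0 ws xs ys v} : adjX om xs ys -> geq om xs (x0 ++ ws) -> wpath om xs v ->
  exists l, gen v l /\ geq om ys (xs ++ [l]) /\ geq om ys (x0 ++ ws ++ [l]) /\
            wpath om ys (ltgt l).
Proof.
  intros H E P. destruct (adjX_step H P) as [l [Hg [E' P']]].
  exists l. repeat split; auto. apply (geq_walk_snoc l E E'). rewrite (gen_lsrc Hg). auto.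
Qed.

Lemma adjX_sym xs ys : adjX om xs ys -> adjX om ys xs.
Proof.
  intro H. pose proof H as [_ [v [P _]]].
  destruct (adjX_step H P) as [l [Hg [E Py]]].
  split; [exists v; auto|]. exists (ltgt l). split; auto.
  exists (linv l). split; [apply (gen_linv Hg)|].
  apply geq_snoc_linv; auto. rewrite (gen_lsrc Hg). auto.
Qed.

Definition labelled xs ys u (A : vI (Gv u)) : Prop :=
  wpath om xs u /\ valid_from om ys /\
  exists a : GV G u, fac (Gv u) A a /\ a <> gone /\ geq om ys (xs ++ [Elt u a]).

Lemma labelled_flip xs ys u A : labelled xs ys u A -> labelled ys xs u A.
Proof.
  intros [P [_ [a [Ha [na E]]]]]. split; [|split].
  - apply (geq_wpath (geq_sym E)). apply (wpath_snoc (Elt u a)). auto.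
  - exists u; auto.
  - exists (ginv a). split; [apply fac_inv; auto|]. split; [apply ginv_neq1; auto|].
    apply (geq_snoc_linv (Elt u a)); auto.
Qed.

Lemma labelled_factor_labelled p u A :
  labelled_factor om p u A -> labelled (fst p) (snd p) u A.
Proof. intros [H|H]; auto. apply labelled_flip. auto. Qed.

Lemma labelled_geq xs ys xs' ys' u A : labelled xs ys u A ->
  geq om xs xs' -> geq om ys ys' -> labelled xs' ys' u A.
Proof.
  intros [P [[vy Vy] [a [Ha [na E]]]]] E1 E2. split; [|split].
  - apply (geq_wpath E1 P).
  - exists vy. apply (geq_wpath E2 Vy).
  - exists a. split; auto. split; auto.
    eapply rt_trans; [apply (geq_sym E2)|]. eapply rt_trans; [apply E|].
    apply (geq_app_r (c := u) E1 P). apply (wpath_single (Elt u a)).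
Qed.

Lemma labelled_factor_same_edge p q u A :
  same_edge om p q -> labelled_factor om p u A -> labelled_factor om q u A.
Proof.
  intros [[H1 H2]|[H1 H2]] H; apply labelled_factor_labelled in H.
  - left. eapply labelled_geq; eauto.
  - right. eapply labelled_geq; eauto.
Qed.

Lemma labelled_gen xs ys u A l : labelled xs ys u A -> gen u l -> geq om ys (xs ++ [l]) ->
  exists a, l = Elt u a /\ fac (Gv u) A a /\ a <> gone.
Proof.
  intros [P [_ [b [Hb [nb E]]]]] Hg E'.
  assert (E2 : geq om (xs ++ [l]) (xs ++ [Elt u b]))
    by (eapply rt_trans; [apply geq_sym; exact E'|exact E]).
  assert (Pl : wpath om (xs ++ [l]) (ltgt l)) by (apply wpath_snoc; rewrite (gen_lsrc Hg); auto).
  assert (Hu : ltgt l = u).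
  { eapply wpath_det; [apply (geq_wpath E2 Pl)|]. apply (wpath_snoc (Elt u b)). auto. }
  assert (Pl1 : wpath u [l] u)
    by (rewrite <- Hu at 2; rewrite <- (gen_lsrc Hg); apply wpath_single).
  assert (Ec : eval_word u [l] = eval_word u [Elt u b]).
  { apply (eval_word_cancel_prefix E2 P); auto. apply (wpath_single (Elt u b)). }
  destruct Hg as [[e [-> _]]|[i [a [-> [Ha na]]]]].
  - exfalso. assert (Par := eval_word_even_arrows Pl1 (wpath_single (Elt u b)) Ec).
    discriminate.
  - rewrite !eval_Elt in Ec. apply nend_inj in Ec. subst a. eauto.
Qed.

End Labels.

Definition phi_reachable {G : RAGoG} u (A : vI (@Gv G u)) v (B : vI (Gv v)) : Prop :=
  exists gam : gpath u v, forall b : Gv v, phi_path gam (fac (Gv u) A) b <-> fac (Gv v) B b.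

Lemma phi_reachable_refl (G : RAGoG) (u : V G) A : phi_reachable u A u A.
Proof. exists (gnil u). simpl. tauto. Qed.

Fixpoint gpath_cat {G : RAGoG} {u v k : V G} (p : gpath u v) : gpath v k -> gpath u k :=
  match p in gpath u0 v0 return gpath v0 k -> gpath u0 k with
  | gnil _ => fun q => q
  | gcons e p' => fun q => gcons e (gpath_cat p' q)
  end.

Lemma phi_path_cat (G : RAGoG) (u v k : V G) (p : gpath u v) (q : gpath v k) P :
  phi_path (gpath_cat p q) P = phi_path q (phi_path p P).
Proof. revert P. induction p; intro P; simpl; auto. Qed.

Lemma phi_reachable_trans (G : RAGoG) (u v k : V G) A B C :
  @phi_reachable G u A v B -> phi_reachable v B k C -> phi_reachable u A k C.
Proof.
  intros [g1 H1] [g2 H2]. exists (gpath_cat g1 g2). intro b. rewrite phi_path_cat.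
  replace (phi_path g1 (fac (Gv u) A)) with (fac (Gv v) B); [apply H2|].
  apply functional_extensionality. intro y. apply propositional_extensionality.
  symmetry. apply H1.
Qed.

Lemma labelled_unique (G : RAGoG) om xs ys (u v : V G) A B :
  labelled om xs ys u A -> labelled om xs ys v B -> phi_reachable u A v B.
Proof.
  intros HA [P [_ [b [Hb [nb E]]]]].
  assert (u = v) as <- by exact (wpath_det (proj1 HA) P).
  destruct (labelled_gen HA (l := Elt u b)) as [a [Ea [Ha _]]]; auto.
  - right. eauto.
  - injection Ea as Ea. apply inj_pairT2 in Ea. subst a.
    rewrite (fac_unique Ha Hb nb). apply phi_reachable_refl.
Qed.

(** * Relations of length three and four among generators *)

Section ShortRelations.
Variable G : RAGoG.
Implicit Types (u v : V G) (e f : E G) (w : list (letter G)).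

Lemma eval_word_cons l v w : eval_word v (l :: w) = act l (eval_word v w).
Proof. reflexivity. Qed.

Lemma edges_eval_Arr_single e v : tgt e = v -> edges (eval_word v [Arr e]) = [e].
Proof. intros <-. apply (edges_eval_Arr e (wnil _)). discriminate. Qed.

Lemma edges_eval_Arr_Arr e f : src f = tgt e -> f <> bar e ->
  edges (eval_word (tgt f) [Arr e; Arr f]) = [e; f].
Proof.
  intros Hf nf. rewrite (edges_eval_Arr e (w := [Arr f])), edges_eval_Arr_single; auto.
  - rewrite <- Hf. apply (wpath_single (Arr f)).
  - rewrite edges_eval_Arr_single; auto. simpl. congruence.
Qed.

Lemma triangle_gen_cases v s1 s2 s3 :
  gen v s1 -> gen (ltgt s1) s2 -> gen v s3 -> ltgt s3 = ltgt s2 ->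
  eval_word (ltgt s2) [s3] = eval_word (ltgt s2) [s1; s2] ->
  (exists e, s1 = Arr e /\ s2 = Arr (bar e)) \/
  (exists e, s1 = Arr e /\ s3 = Arr e) \/
  (exists f, s2 = Arr f /\ s3 = Arr f) \/
  (exists i (a1 a2 a3 : GV G v), s1 = Elt v a1 /\ s2 = Elt v a2 /\ s3 = Elt v a3 /\
     fac (Gv v) i a1 /\ fac (Gv v) i a2 /\ fac (Gv v) i a3 /\
     a1 <> gone /\ a2 <> gone /\ a3 <> gone).
Proof.
  intros g1 g2 g3 H3 Eq.
  assert (P12 : wpath v [s1; s2] (ltgt s2)).
  { apply wpath_cons. split; [symmetry; apply (gen_lsrc g1)|].
    rewrite <- (gen_lsrc g2). apply wpath_single. }
  assert (P3 : wpath v [s3] (ltgt s2)) by (rewrite <- H3, <- (gen_lsrc g3); apply wpath_single).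
  assert (Par := eval_word_even_arrows P3 P12 Eq).
  assert (Ed := f_equal (@edges G) Eq).
  destruct g1 as [[e [-> <-]]|[i1 [a1 [-> [Ha1 na1]]]]];
  destruct g2 as [[f [-> Hf]]|[i2 [a2 [-> [Ha2 na2]]]]];
  destruct g3 as [[f' [-> _]]|[i3 [a3 [-> [Ha3 na3]]]]];
  try discriminate Par; cbn [ltgt] in *.
  - destruct (classic (f = bar e)) as [->|nf]; [left; eauto|exfalso].
    rewrite eval_word_cons, edges_act_Elt, edges_eval_Arr_Arr in Ed; auto. discriminate.
  - right; left. exists e. split; auto. f_equal.
    assert (Pe : wpath (tgt e) [Elt (tgt e) a2] (tgt e)) by apply (wpath_single (Elt (tgt e) a2)).
    rewrite edges_eval_Arr_single, (edges_eval_Arr e Pe), edges_eval_Elt in Ed; auto.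
    + simpl in Ed. congruence.
    + rewrite edges_eval_Elt. discriminate.
  - right; right; left. exists f. split; auto. f_equal.
    rewrite edges_eval_Arr_single, edges_eval_Elt, edges_eval_Arr_single in Ed; auto.
    congruence.
  - right; right; right.
    rewrite eval_Elt, eval_word_cons, eval_Elt, act_Elt_nend in Eq. apply nend_inj in Eq.
    destruct (fac_mul_same_factor Ha1 Ha2 Ha3 na1 na2 na3 Eq) as [-> ->].
    exists i1, a1, a2, a3. auto 10.
Qed.

Lemma edges_eval_Arr_nil e v w : wpath (tgt e) w v ->
  edges (eval_word v (Arr e :: w)) = [] -> edges (eval_word v w) = [bar e].
Proof.
  intros P E. rewrite eval_word_cons in E.
  destruct (edges_act_Arr e (eval_word_reduced P)) as [[_ E']|[_ E']]; congruence.
Qed.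

Lemma backtracks_eval_Elt_Arr e f v (a : GV G (src f)) : tgt f = v ->
  backtracks e (projT2 (eval_word v [Elt (src f) a; Arr f])) -> exists k, a = iota f k.
Proof.
  intros <- Hb. unfold eval_word, nf_base in Hb. cbn [act_word] in Hb.
  assert (Hf : act (Arr f) (existT (nf G) (tgt f) (nend (tgt f) gone))
               = existT (nf G) (src f) (ncons f gone (nend (tgt f) gone))).
  { apply act_Arr_push. simpl. auto. }
  rewrite Hf, act_Elt_at in Hb. destruct Hb as [_ Hb].
  apply coset_rep_eq1 in Hb. destruct Hb as [k Hk]. rewrite gmulg1 in Hk. eauto.
Qed.

Lemma square_gen_cases u (a1 : GV G u) s2 s3 s4 :
  gen u s2 -> gen (ltgt s2) s3 -> gen (ltgt s3) s4 -> ltgt s4 = u ->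
  eval_word u [] = eval_word u [Elt u a1; s2; s3; s4] ->
  (exists e, s2 = Arr e /\ s3 = Arr (bar e)) \/
  (exists e, s3 = Arr e /\ s4 = Arr (bar e)) \/
  (exists e (k : Ge (bar e)) i3,
     s2 = Arr e /\ s3 = Elt (tgt e) (iota (bar e) k) /\ s4 = Arr (bar e) /\
     fac (Gv (tgt e)) i3 (iota (bar e) k) /\ iota (bar e) k <> gone) \/
  (exists i2 i3 i4 (a2 a3 a4 : GV G u), s2 = Elt u a2 /\ s3 = Elt u a3 /\ s4 = Elt u a4 /\
     fac (Gv u) i2 a2 /\ fac (Gv u) i3 a3 /\ fac (Gv u) i4 a4 /\ a3 <> gone /\
     gmul (gmul (gmul a1 a2) a3) a4 = gone).
Proof.
  intros g2 g3 g4 H4 Eq.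
  assert (P4 : wpath (ltgt s3) [s4] u) by (rewrite <- H4, <- (gen_lsrc g4); apply wpath_single).
  assert (P34 : wpath (ltgt s2) [s3; s4] u).
  { apply wpath_cons. split; [symmetry; apply (gen_lsrc g3)|auto]. }
  assert (P : wpath u [Elt u a1; s2; s3; s4] u).
  { apply wpath_cons. split; auto. apply wpath_cons. split; [symmetry; apply (gen_lsrc g2)|auto]. }
  assert (Par := eval_word_even_arrows (wnil u) P Eq).
  assert (Ed := f_equal (@edges G) Eq). rewrite eval_word_cons, edges_act_Elt in Ed. symmetry in Ed.
  destruct g2 as [[e [-> <-]]|[i2 [a2 [-> [Ha2 na2]]]]];
  destruct g3 as [[f [-> Hf]]|[i3 [a3 [-> [Ha3 na3]]]]];
  destruct g4 as [[h [-> Hh]]|[i4 [a4 [-> [Ha4 na4]]]]];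
  try discriminate Par; cbn [ltgt lsrc] in *.
  - left. exists e. split; auto. f_equal.
    apply edges_eval_Arr_nil in Ed; auto. rewrite <- H4 in Ed.
    assert (Pf : wpath (tgt f) [Elt (tgt f) a4] (tgt f)) by apply (wpath_single (Elt (tgt f) a4)).
    rewrite (edges_eval_Arr f Pf), edges_eval_Elt in Ed.
    + simpl in Ed. congruence.
    + rewrite edges_eval_Elt. discriminate.
  - right; right; left.
    assert (Ed' := edges_eval_Arr_nil e P34 Ed).
    rewrite eval_word_cons, edges_act_Elt, edges_eval_Arr_single in Ed'; auto.
    injection Ed' as ->.
    rewrite eval_word_cons in Ed.
    destruct (edges_act_Arr e (eval_word_reduced P34)) as [[_ E']|[Hb _]];
      [rewrite E' in Ed; discriminate|].
    destruct (backtracks_eval_Elt_Arr e (bar e) a3 H4 Hb) as [k ->]. exists e, k, i3. auto.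
  - right; left. exists f. split; auto. f_equal.
    rewrite eval_word_cons, edges_act_Elt in Ed. apply edges_eval_Arr_nil in Ed; auto.
    rewrite edges_eval_Arr_single in Ed; auto. congruence.
  - right; right; right. exists i2, i3, i4, a2, a3, a4. do 7 (split; auto).
    unfold eval_word, nf_base in Eq. cbn [act_word] in Eq. rewrite !act_Elt_nend in Eq.
    apply nend_inj in Eq. rewrite gmulg1, !gmulA in Eq. auto.
Qed.

End ShortRelations.

(** * Triangles and squares of X *)

Lemma phi_reachable_edge (G : RAGoG) (e : E G) (A : vI (Gv (src e))) (C : vI (Gv (tgt e)))
    (k : Ge e) :
  k <> gone -> fac (Gv (src e)) A (iota e k) -> fac (Gv (tgt e)) C (iota_bar e k) ->
  phi_reachable (src e) A (tgt e) C.
Proof.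
  intros nk HA HC.
  destruct (graphical_fac_preimage A (iota_graphical G e) nk HA) as [A' [HA' A_img]].
  destruct (graphical_fac_preimage C (iota_bar_graphical G e) nk HC) as [C' [HC' C_img]].
  rewrite <- (fac_unique HA' HC' nk) in C_img.
  exists (gcons e (gnil (tgt e))). intro b. simpl. unfold phi_e. split.
  - intros [_ [g [Hg <-]]]. apply C_img.
    apply A_img in Hg. destruct Hg as [y [Hy Hyg]]. apply iota_inj in Hyg. subst y. eauto.
  - intro Hb. split.
    + intros x Hx. apply A_img in Hx. destruct Hx as [y [_ Hy]]. eauto.
    + apply C_img in Hb. destruct Hb as [y [Hy <-]]. exists y. split; auto.
      apply A_img. eauto.
Qed.

Section Polygons.
Variable G : RAGoG.
Variable om : V G.
Implicit Types (u v : V G) (xa xb xc xd xs ys zs : list (letter G)).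

Lemma geq_edge_loop xs e k : wpath om xs (src e) ->
  geq om (xs ++ [Arr e; Elt (tgt e) (iota_bar e k); Arr (bar e)]) (xs ++ [Elt (src e) (iota e k)]).
Proof.
  intro P.
  apply rt_trans with (xs ++ [Elt (src e) (iota e k); Arr e; Arr (bar e)]).
  - apply geq_sym.
    refine (@geq_rel G om xs [Elt (src e) (iota e k); Arr e]
      [Arr e; Elt (tgt e) (iota_bar e k)] [Arr (bar e)] (tgt (bar e)) _ _); [constructor|].
    apply wpath_app. exists (src e). split; auto.
    repeat (apply wpath_cons; split; [reflexivity|]). apply wpath_nil. reflexivity.
  - replace (xs ++ [Elt (src e) (iota e k); Arr e; Arr (bar e)])
      with ((xs ++ [Elt (src e) (iota e k)]) ++ [Arr e; linv (Arr e)])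
      by (rewrite <- app_assoc; reflexivity).
    apply geq_cancel_linv. exact (wpath_snoc (Elt (src e) (iota e k)) P).
Qed.

Lemma consecutive_factors_neq {ys zs u} {p q : GV G u} {i j} :
  geq om zs (ys ++ [Elt u p; Elt u q]) -> wpath om ys u -> valid_from om zs ->
  fac (Gv u) i p -> fac (Gv u) j q -> ~ geq om ys zs -> ~ adjX om ys zs -> j <> i.
Proof.
  intros E P Vz Hp Hq nge nadj ->.
  assert (E' : geq om zs (ys ++ [Elt u (gmul p q)])).
  { apply rt_trans with (ys ++ [Elt u p; Elt u q]); auto.
    apply (@geq_rel_last G om ys [Elt u p; Elt u q] _ u); [constructor|].
    apply wpath_app. exists u. split; auto.
    apply wpath_cons. split; auto. apply (wpath_single (Elt u q)). }
  destruct (classic (gmul p q = gone)) as [H1|H1].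
  - apply nge. apply geq_sym. apply rt_trans with (ys ++ [Elt u (gmul p q)]); auto. rewrite H1.
    pose proof (@geq_rel_last G om ys [Elt u gone] [] u) as H. rewrite app_nil_r in H.
    apply H; [constructor|]. apply (wpath_snoc (Elt u gone)). auto.
  - apply nadj. split; auto. exists u. split; auto. exists (Elt u (gmul p q)). split; auto.
    right. exists i, (gmul p q). split; auto. split; auto. apply fac_mul; auto.
Qed.

Lemma eval_word_of_loop xs u w : geq om xs (xs ++ w) -> wpath om xs u -> wpath u w u ->
  eval_word u [] = eval_word u w.
Proof.
  intros E P Pw. rewrite <- (app_nil_r xs) in E at 1.
  exact (eval_word_cancel_prefix E P (wnil u) Pw).
Qed.

(* The relation iota_e(h) e = e iota_{bar e}(h) collapses the loop to a1 iota_e(k') = 1. *)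
Lemma phi_reachable_edge_loop {xs e} {a1 : GV G (src e)} {k : Ge (bar e)} {A C} :
  wpath om xs (src e) -> fac (Gv (src e)) A a1 -> a1 <> gone ->
  fac (Gv (tgt e)) C (iota (bar e) k) ->
  geq om xs (xs ++ [Elt (src e) a1; Arr e; Elt (tgt e) (iota (bar e) k); Arr (bar e)]) ->
  phi_reachable (src e) A (tgt e) C.
Proof.
  intros P Ha1 na1 HC Eloop.
  set (k' := castG (Ge_bar G e) k).
  assert (Hk : iota_bar e k' = iota (bar e) k).
  { unfold iota_bar, k'. rewrite castG_trans, castG_refl. auto. }
  assert (Eloop' : geq om xs (xs ++ [Elt (src e) a1; Elt (src e) (iota e k')])).
  { apply rt_trans with (1 := Eloop). rewrite <- Hk.
    pose proof (geq_edge_loop e k' (wpath_snoc (Elt (src e) a1) P)) as Hloop.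
    rewrite <- !app_assoc in Hloop. exact Hloop. }
  assert (Eq := eval_word_of_loop Eloop' P (welt a1 (wpath_single (Elt (src e) (iota e k'))))).
  unfold eval_word, nf_base in Eq. cbn [act_word] in Eq. rewrite !act_Elt_nend in Eq.
  apply nend_inj in Eq. rewrite gmulg1 in Eq. symmetry in Eq.
  apply ginv_unique_l in Eq. rewrite <- (hom_ginv (iota_hom G e)) in Eq.
  assert (nk : ginv k' <> gone).
  { intro H0. apply na1. rewrite Eq, H0. apply (hom_gone (iota_hom G e)). }
  apply (@phi_reachable_edge G e A C (ginv k') nk); [rewrite <- Eq; auto|].
  rewrite (hom_ginv (iota_bar_hom G e)), Hk. apply fac_inv. auto.
Qed.

Lemma triangle_labelled xa xb xc :
  adjX om xa xb -> adjX om xb xc -> adjX om xa xc ->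
  ~ geq om xa xb -> ~ geq om xb xc -> ~ geq om xa xc ->
  exists v (C : vI (Gv v)),
    labelled om xa xb v C /\ labelled om xb xc v C /\ labelled om xa xc v C.
Proof.
  intros Hab Hbc Hac n1 n2 n3. pose proof Hab as [_ [v [Pa _]]].
  destruct (adjX_step Hab Pa) as [s1 [g1 [E1 Pb]]].
  destruct (adjX_step_walk Hbc E1 Pb) as [s2 [g2 [E2 [E12 Pc]]]].
  destruct (adjX_step Hac Pa) as [s3 [g3 [E3 Pc']]].
  assert (H3 : ltgt s3 = ltgt s2) by exact (wpath_det Pc' Pc).
  assert (Eq : eval_word (ltgt s2) [s3] = eval_word (ltgt s2) [s1; s2]).
  { apply (eval_word_cancel_prefix (rt_trans _ _ _ _ _ (geq_sym E3) E12) Pa).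
    - rewrite <- H3, <- (gen_lsrc g3). apply wpath_single.
    - apply wpath_cons. split; [symmetry; apply (gen_lsrc g1)|].
      rewrite <- (gen_lsrc g2). apply wpath_single. }
  destruct (triangle_gen_cases g1 g2 g3 H3 Eq)
    as [[e [-> ->]]|[[e [-> ->]]|[[f [-> ->]]|[i [a1 [a2 [a3 [-> [-> [->
        [Ha1 [Ha2 [Ha3 [na1 [na2 na3]]]]]]]]]]]]]]].
  - exfalso. apply n3. apply geq_sym. apply rt_trans with (1 := E12).
    rewrite <- (app_nil_r xa) at 2. apply (geq_backtrack []).
    rewrite app_nil_r. change (wpath om xa (lsrc (Arr e))). rewrite (gen_lsrc g1). auto.
  - exfalso. apply n2. apply rt_trans with (xa ++ [Arr e]); auto. apply geq_sym. auto.
  - exfalso. apply n1. apply (geq_snoc_cancel (Arr f)).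
    + apply rt_trans with xc; [apply geq_sym|]; auto.
    + rewrite (gen_lsrc g3). auto.
  - exists v, i. repeat split; auto; try (exists v; auto); eauto.
Qed.

Lemma square_labelled xa xb xc xd u (A : vI (Gv u)) :
  adjX om xa xb -> adjX om xb xc -> adjX om xc xd -> adjX om xd xa ->
  ~ adjX om xa xc -> ~ adjX om xb xd -> ~ geq om xa xc -> ~ geq om xb xd ->
  labelled om xa xb u A ->
  exists w (C : vI (Gv w)), labelled om xc xd w C /\ phi_reachable u A w C.
Proof.
  intros Hab Hbc Hcd Hda nac nbd nac' nbd' HL. pose proof HL as [Pa _].
  destruct (adjX_step Hab Pa) as [s1 [g1 [E1 Pb]]].
  destruct (labelled_gen HL g1 E1) as [a1 [-> [Ha1 na1]]]. cbn [ltgt] in Pb.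
  destruct (adjX_step_walk Hbc E1 Pb) as [s2 [g2 [_ [Ec Pc]]]].
  destruct (adjX_step_walk Hcd Ec Pc) as [s3 [g3 [E3 [Ed Pd]]]].
  destruct (adjX_step_walk Hda Ed Pd) as [s4 [g4 [E4 [Ea Pa']]]].
  assert (H4 : ltgt s4 = u) by exact (wpath_det Pa' Pa).
  assert (Eq : eval_word u [] = eval_word u [Elt u a1; s2; s3; s4]).
  { apply (eval_word_of_loop Ea Pa).
    apply wpath_cons. split; auto. apply wpath_cons. split; [symmetry; apply (gen_lsrc g2)|].
    apply wpath_cons. split; [symmetry; apply (gen_lsrc g3)|].
    rewrite <- H4, <- (gen_lsrc g4). apply wpath_single. }
  destruct (square_gen_cases a1 g2 g3 g4 H4 Eq)
    as [[e [-> ->]]|[[e [-> ->]]|[[e [k [i3 [-> [-> [-> [Ha3 na3]]]]]]]|[i2 [i3 [i4 [a2 [a3 [a4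
        [-> [-> [-> [Ha2 [Ha3 [Ha4 [na3 Eprod]]]]]]]]]]]]]]]].
  - exfalso. apply nbd'. apply rt_trans with (xa ++ [Elt u a1]); auto.
    apply geq_sym. apply rt_trans with (1 := Ed). apply (geq_backtrack [Elt u a1]).
    change (wpath om (xa ++ [Elt u a1]) (lsrc (Arr e))). rewrite (gen_lsrc g2).
    apply (wpath_snoc (Elt u a1)). auto.
  - exfalso. apply nac'. apply rt_trans with (1 := Ea).
    apply rt_trans with (xa ++ [Elt u a1; s2]); [|apply geq_sym; auto].
    apply (geq_backtrack [Elt u a1; s2]).
    change (wpath om (xa ++ [Elt u a1; s2]) (lsrc (Arr e))). rewrite (gen_lsrc g3).
    apply (geq_wpath Ec Pc).
  - assert (He : src e = u) by exact (gen_lsrc g2). clear H4. subst u.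
    exists (tgt e), i3. split.
    + split; [exact Pc|]. split; [exists (tgt e); exact Pd|]. eauto.
    + exact (phi_reachable_edge_loop Pa Ha1 na1 Ha3 Ea).
  - cbn [ltgt] in *.
    assert (n2A : i2 <> A)
      by exact (consecutive_factors_neq Ec Pa (ex_intro _ _ Pc) Ha1 Ha2 nac' nac).
    assert (n4A : A <> i4).
    { assert (Eb : geq om xb (xd ++ [Elt u a4; Elt u a1])) by exact (geq_walk_snoc _ E4 E1 Pa).
      apply (consecutive_factors_neq Eb Pd (ex_intro _ _ Pb) Ha4 Ha1).
      - intro H. apply nbd'. apply geq_sym. auto.
      - intro H. apply nbd. apply adjX_sym. auto. }
    rewrite (fac_prod4_same_factor Ha1 Ha2 Ha3 Ha4 na1 n2A (not_eq_sym n4A) Eprod) in Ha3.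
    exists u, A. split; [|apply phi_reachable_refl].
    split; [exact Pc|]. split; [exists u; exact Pd|]. eauto.
Qed.

End Polygons.

(** * Transport of labels along a hyperplane *)

Section Hyperplanes.
Variable G : RAGoG.
Variable om : V G.
Implicit Types (p q : @edgeX G).

Definition transports_labels p q : Prop :=
  forall u (A : vI (Gv u)), labelled_factor om p u A ->
    exists w (C : vI (Gv w)), labelled_factor om q w C /\ phi_reachable u A w C.

Lemma same_edge_sym p q : same_edge om p q -> same_edge om q p.
Proof. intros [[H1 H2]|[H1 H2]]; [left|right]; split; apply geq_sym; auto. Qed.

Lemma in_triangle_rel_sym p q : in_triangle_rel om p q -> in_triangle_rel om q p.
Proof. intros [a [b [c H]]]. exists a, b, c. tauto. Qed.

Lemma opposite_rel_sym p q : opposite_rel om p q -> opposite_rel om q p.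
Proof.
  intros [a [b [c [d [H1 [H2 [H3 [H4 [na [nb [n1 [n2 [n3 [n4 [n5 [n6 [Hp Hq]]]]]]]]]]]]]]]]].
  exists c, d, a, b.
  assert (~ adjX om c a) by (intro Hx; apply na, adjX_sym; auto).
  assert (~ adjX om d b) by (intro Hx; apply nb, adjX_sym; auto).
  assert (~ geq om c a) by (intro Hx; apply n5, geq_sym; auto).
  assert (~ geq om d b) by (intro Hx; apply n6, geq_sym; auto).
  tauto.
Qed.

Lemma transports_labels_same_edge p q : same_edge om p q -> transports_labels p q.
Proof.
  intros S u A H. exists u, A. split; [|apply phi_reachable_refl].
  eapply labelled_factor_same_edge; eauto.
Qed.

Lemma transports_labels_side p xs ys q :
  same_edge om p (xs, ys) ->
  (forall u (A : vI (Gv u)), labelled om xs ys u A ->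
     exists w (C : vI (Gv w)), labelled_factor om q w C /\ phi_reachable u A w C) ->
  transports_labels p q.
Proof.
  intros S H u A Hp. apply H.
  exact (labelled_factor_labelled (labelled_factor_same_edge S Hp)).
Qed.

Lemma transports_labels_triangle p q : in_triangle_rel om p q -> transports_labels p q.
Proof.
  intros [a [b [c [Hab [Hbc [Hac [n1 [n2 [n3 [Hp Hq]]]]]]]]]].
  destruct (triangle_labelled Hab Hbc Hac n1 n2 n3) as [v [C [Lab [Lbc Lac]]]].
  assert (Lq : labelled_factor om q v C).
  { destruct Hq as [Hq|[Hq|Hq]]; apply same_edge_sym in Hq;
      eapply labelled_factor_same_edge; eauto; left; auto. }
  destruct Hp as [Hp|[Hp|Hp]]; apply (transports_labels_side Hp); intros u A HA;
    exists v, C; split; auto; eapply labelled_unique; eauto.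
Qed.

Lemma transports_labels_square p q : opposite_rel om p q -> transports_labels p q.
Proof.
  intros [a [b [c [d [Hab [Hbc [Hcd [Hda [nac [nbd [_ [_ [_ [_ [nac' [nbd' [Hp Hq]]]]]]]]]]]]]]]]].
  apply (transports_labels_side Hp). intros u A HA.
  destruct (square_labelled Hab Hbc Hcd Hda nac nbd nac' nbd' HA) as [w [C [L R]]].
  exists w, C. split; auto.
  eapply labelled_factor_same_edge; [apply same_edge_sym; eauto|]. left. auto.
Qed.

Lemma same_hyperplane_transports_labels p q :
  same_hyperplane om p q -> transports_labels p q /\ transports_labels q p.
Proof.
  intro H. induction H as [p q [_ [_ [S|[T|O]]]]|p|p q _ [IH1 IH2]|p q r _ [IH1 IH2] _ [IH3 IH4]].
  - split; apply transports_labels_same_edge; auto. apply same_edge_sym. auto.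
  - split; apply transports_labels_triangle; auto. apply in_triangle_rel_sym. auto.
  - split; apply transports_labels_square; auto. apply opposite_rel_sym. auto.
  - split; apply transports_labels_same_edge; left; split; apply rt_refl.
  - split; auto.
  - split; intros u A Hl.
    + destruct (IH1 u A Hl) as [w [C [L1 R1]]]. destruct (IH3 w C L1) as [k [D [L2 R2]]].
      exists k, D. split; auto. eapply phi_reachable_trans; eauto.
    + destruct (IH4 u A Hl) as [w [C [L1 R1]]]. destruct (IH2 w C L1) as [k [D [L2 R2]]].
      exists k, D. split; auto. eapply phi_reachable_trans; eauto.
Qed.

End Hyperplanes.

Theorem lemma4p10 (G : RAGoG) (om : V G)
    (p q : list (letter G) * list (letter G))
    (u v : V G) (A : vI (Gv u)) (B : vI (Gv v)) :
  labelled_factor om p u A ->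
  labelled_factor om q v B ->
  same_hyperplane om p q ->
  exists gam : gpath u v,
    forall b : Gv v, phi_path gam (fac (Gv u) A) b <-> fac (Gv v) B b.
Proof.
  intros Hp Hq Hh.
  destruct (proj1 (same_hyperplane_transports_labels Hh) u A Hp) as [w [C [Lq R]]].
  apply (phi_reachable_trans R).
  exact (labelled_unique (labelled_factor_labelled Lq) (labelled_factor_labelled Hq)).
Qed.
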